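(* Let $\Gamma=(V,E)$ be a Veldkamp $n$-gon ($n\ge 2$) and suppose that the local opposition relation $\equiv_v$ is trivial for some $v\in V$. Then $\equiv_w$ is trivial for every $w\in V$ with ${\rm dist}(v,w)$ even. If moreover $n$ is odd, then $\equiv_w$ is trivial for all $w\in V$.
   Context: A graph is a pair $(V,E)$ with $E$ a set of $2$-element subsets of $V$; $\Gamma_v$ is the set of neighbors of $v$. An $s$-path is a sequence $(x_0,\dots,x_s)$ of vertices with consecutive vertices adjacent and $x_{i-2}\ne x_i$ for $i\in[2,s]$; ${\rm dist}$ is graph distance. A closed $s$-path is an $s$-path with $s\ge3$ whose first and last vertices coincide; an $s$-circuit is the subgraph determined by a closed $s$-path. An opposition relation on a set $X$ is a symmetric anti-reflexive relation; it is trivial if any two distinct elements are related; it is $k$-plump if for every $S\subseteq X$ with $|S|\le k$ some element of $X$ is related to all elements of $S$. A Veldkamp graph is a graph with a $2$-plump opposition relation $\equiv_v$ on $\Gamma_v$ for each vertex $v$. A path $(v_0,\dots,v_s)$ is straight if $v_{i-1}\equiv_{v_i}v_{i+1}$ for all $i\in[1,s-1]$; a circuit is straight if every path in it is straight. A Veldkamp $n$-gon ($n\ge2$) is a Veldkamp graph satisfying (VP1) connected and bipartite; (VP2) for each $k\in[1,n-1]$ each straight $k$-path is the unique straight path between its endpoints of length at most $k$; (VP3) every straight $(n+1)$-path lies in a straight $2n$-circuit. *)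

From Stdlib Require Import Arith List Lia.
Import ListNotations.

Section Defs.
Variable V : Type.

Definition is_graph (adj : V -> V -> Prop) : Prop :=
  (forall x y, adj x y -> adj y x) /\ (forall x, ~ adj x x).

Definition nbhd (adj : V -> V -> Prop) (v : V) : V -> Prop := fun w => adj v w.

Definition opposition_on (X : V -> Prop) (R : V -> V -> Prop) : Prop :=
  (forall x y, R x y -> X x /\ X y) /\
  (forall x y, R x y -> R y x) /\
  (forall x, ~ R x x).

Definition trivial_opp (X : V -> Prop) (R : V -> V -> Prop) : Prop :=
  forall x y, X x -> X y -> x <> y -> R x y.

(* k-plump: every subset S of X with |S| <= k (given by an enumerating list
   of length <= k) has an element of X related to all elements of S. *)
Definition plump (k : nat) (X : V -> Prop) (R : V -> V -> Prop) : Prop :=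
  forall S : list V, (forall x, In x S -> X x) -> length S <= k ->
    exists y, X y /\ forall x, In x S -> R y x.

(* Veldkamp graph: opp v is the local opposition relation on Gamma_v. *)
Definition veldkamp_graph (adj : V -> V -> Prop) (opp : V -> V -> V -> Prop) : Prop :=
  is_graph adj /\
  forall v, opposition_on (nbhd adj v) (opp v) /\ plump 2 (nbhd adj v) (opp v).

(* An s-path (x_0, ..., x_s), given as x : nat -> V (values beyond s irrelevant). *)
Definition is_path (adj : V -> V -> Prop) (s : nat) (x : nat -> V) : Prop :=
  (forall i, i < s -> adj (x i) (x (S i))) /\
  (forall i, i + 2 <= s -> x i <> x (i + 2)).

Definition straight_cond (opp : V -> V -> V -> Prop) (s : nat) (x : nat -> V) : Prop :=
  forall i, i + 2 <= s -> opp (x (S i)) (x i) (x (i + 2)).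

Definition straight_path adj opp s x : Prop := is_path adj s x /\ straight_cond opp s x.

Definition walk (adj : V -> V -> Prop) (k : nat) (w : nat -> V) : Prop :=
  forall i, i < k -> adj (w i) (w (S i)).

Definition has_walk (adj : V -> V -> Prop) (a b : V) (k : nat) : Prop :=
  exists w, w 0 = a /\ w k = b /\ walk adj k w.

Definition is_dist (adj : V -> V -> Prop) (a b : V) (d : nat) : Prop :=
  has_walk adj a b d /\ forall k, k < d -> ~ has_walk adj a b k.

Definition connected (adj : V -> V -> Prop) : Prop :=
  forall a b, exists k, has_walk adj a b k.

Definition bipartite (adj : V -> V -> Prop) : Prop :=
  exists c : V -> bool, forall x y, adj x y -> c x <> c y.

Definition closed_path adj (s : nat) (x : nat -> V) : Prop :=
  is_path adj s x /\ 3 <= s /\ x 0 = x s.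

Definition circ_vert (s : nat) (x : nat -> V) : V -> Prop :=
  fun y => exists i, i <= s /\ y = x i.

Definition circ_edge (s : nat) (x : nat -> V) : V -> V -> Prop :=
  fun a b => exists i, i < s /\
    ((a = x i /\ b = x (S i)) \/ (a = x (S i) /\ b = x i)).

Definition lies_in (s : nat) (x : nat -> V) (k : nat) (y : nat -> V) : Prop :=
  (forall j, j <= k -> circ_vert s x (y j)) /\
  (forall j, j < k -> circ_edge s x (y j) (y (S j))).

Definition path_in_circuit adj s x k y : Prop := is_path adj k y /\ lies_in s x k y.

Definition straight_circuit adj opp (s : nat) (x : nat -> V) : Prop :=
  forall k y, path_in_circuit adj s x k y -> straight_cond opp k y.

Definition VP2 adj opp (n : nat) : Prop :=
  forall k, 1 <= k <= n - 1 ->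
  forall x, straight_path adj opp k x ->
  forall m y, m <= k -> straight_path adj opp m y -> y 0 = x 0 -> y m = x k ->
    m = k /\ forall i, i <= k -> y i = x i.

Definition VP3 adj opp (n : nat) : Prop :=
  forall x, straight_path adj opp (n + 1) x ->
  exists c, closed_path adj (2 * n) c /\ straight_circuit adj opp (2 * n) c /\
            lies_in (2 * n) c (n + 1) x.

Definition veldkamp_ngon adj opp (n : nat) : Prop :=
  2 <= n /\ veldkamp_graph adj opp /\
  (connected adj /\ bipartite adj) /\ VP2 adj opp n /\ VP3 adj opp n.

End Defs.

Arguments nbhd {V}. Arguments trivial_opp {V}. Arguments veldkamp_ngon {V}.
Arguments is_dist {V}.

From Stdlib Require Import Arith List Lia.
Import ListNotations.

Local Arguments opposition_on {V}. Local Arguments plump {V}. Local Arguments is_path {V}.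
Local Arguments straight_path {V}. Local Arguments has_walk {V}. Local Arguments closed_path {V}.
Local Arguments lies_in {V}. Local Arguments straight_circuit {V}.
Local Arguments VP2 {V}. Local Arguments VP3 {V}.

(* The engine is (VP3) together with (VP2): a straight (n+1)-path [y] lies in a
   straight 2n-circuit, which (VP2) forces to be a simple cycle without backtracking;
   unrolling it periodically, [y] extends to a closed straight walk of length 2n all
   of whose windows are straight ([straight_completion]).  Reading such circuits
   backwards gives, for a vertex [v] with trivial opposition and a straight n-path
   from [v] to [w]:
   - every neighbour of [w] is the penultimate vertex of a straight n-path from [v]
     to [w] ([straight_via_switch], using 2-plumpness at [w]);
   - two distinct such penultimate vertices are opposite at [w] ([straight_via_opposite]),
   so the opposition at [w] is trivial ([trivial_transfer]).  Two straight n-paths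
   starting [v, u, x, ...] and [w, u, x, ...] with a common tail then carry triviality
   from [v] to any [w] at distance 2 ([trivial_two_steps]), hence along even walks.
   When n is odd, a detour through the far end of a straight n-path from [v] turns
   odd walks into even ones. *)

Section StraightPaths.
Context {V : Type} {adj : V -> V -> Prop} {opp : V -> V -> V -> Prop}.

Lemma straight_le k m x : m <= k -> straight_path adj opp k x -> straight_path adj opp m x.
Proof.
  intros Hm [[Ha Hb] Hc]. split; [split|]; intros i Hi; [apply Ha|apply Hb|apply Hc]; lia.
Qed.

Lemma straight_ext k x y : (forall i, i <= k -> x i = y i) ->
  straight_path adj opp k x -> straight_path adj opp k y.
Proof.
  intros E [[Ha Hb] Hc]. split; [split|]; intros i Hi; rewrite <- !E by lia; auto.
Qed.

Context (adj_sym : forall x y, adj x y -> adj y x).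
Context (opp_sym : forall v x y, opp v x y -> opp v y x).
Context (opp_nbhd : forall v x y, opp v x y -> adj v x /\ adj v y).
Context (opp_irr : forall v x, ~ opp v x x).

Lemma straight_rev k x : straight_path adj opp k x ->
  straight_path adj opp k (fun i => x (k - i)).
Proof.
  intros [[Ha Hb] Hc]. split; [split|].
  - intros i Hi. apply adj_sym. replace (k - i) with (S (k - S i)) by lia. apply Ha. lia.
  - intros i Hi E. apply (Hb (k - (i + 2))); [lia|].
    replace (k - (i + 2) + 2) with (k - i) by lia. auto.
  - intros i Hi. apply opp_sym.
    replace (k - S i) with (S (k - (i + 2))) by lia.
    replace (k - i) with (k - (i + 2) + 2) by lia. apply Hc. lia.
Qed.

Lemma straight_shift k a x : a <= k -> straight_path adj opp k x ->
  straight_path adj opp (k - a) (fun i => x (a + i)).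
Proof.
  intros Hak [[Ha Hb] Hc]. split; [split|]; intros i Hi.
  - replace (a + S i) with (S (a + i)) by lia. apply Ha. lia.
  - replace (a + (i + 2)) with (a + i + 2) by lia. apply Hb. lia.
  - replace (a + S i) with (S (a + i)) by lia.
    replace (a + (i + 2)) with (a + i + 2) by lia. apply Hc. lia.
Qed.

Lemma straight_snoc k x z : 1 <= k -> straight_path adj opp k x ->
  opp (x k) (x (k - 1)) z ->
  straight_path adj opp (S k) (fun i => if Nat.eqb i (S k) then z else x i).
Proof.
  intros Hk [[Ha Hb] Hc] Hz.
  assert (Old : forall i, i <= k -> (if Nat.eqb i (S k) then z else x i) = x i).
  { intros i Hi. destruct (Nat.eqb_spec i (S k)); [lia|auto]. }
  split; [split|]; intros i Hi.
  - destruct (Nat.eq_dec i k) as [->|Hne].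
    + rewrite Nat.eqb_refl, Old by lia. apply (opp_nbhd _ _ _ Hz).
    + rewrite !Old by lia. apply Ha. lia.
  - destruct (Nat.eq_dec i (k - 1)) as [->|Hne].
    + replace (k - 1 + 2) with (S k) by lia. rewrite Nat.eqb_refl, Old by lia.
      intro E. rewrite E in Hz. apply (opp_irr _ _ Hz).
    + rewrite !Old by lia. apply Hb. lia.
  - destruct (Nat.eq_dec i (k - 1)) as [->|Hne].
    + replace (k - 1 + 2) with (S k) by lia. replace (S (k - 1)) with k by lia.
      rewrite Nat.eqb_refl, !Old by lia. exact Hz.
    + rewrite !Old by lia. apply Hc. lia.
Qed.

Lemma straight_cons k x z : straight_path adj opp k x ->
  opp (x 0) z (x 1) ->
  straight_path adj opp (S k) (fun i => match i with 0 => z | S j => x j end).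
Proof.
  intros [[Ha Hb] Hc] Hz. split; [split|]; intros [|i] Hi; cbn.
  - apply adj_sym, (opp_nbhd _ _ _ Hz).
  - apply Ha. lia.
  - intro E. rewrite E in Hz. apply (opp_irr _ _ Hz).
  - replace (S (i + 2)) with (S i + 2) by lia. apply Hb. lia.
  - exact Hz.
  - replace (S (i + 2)) with (S i + 2) by lia. apply Hc. lia.
Qed.

Lemma walk_concat a b c k l : has_walk adj a b k -> has_walk adj b c l -> has_walk adj a c (k + l).
Proof.
  intros [w1 [W10 [W1k H1]]] [w2 [W20 [W2l H2]]].
  exists (fun i => if Nat.leb i k then w1 i else w2 (i - k)). split; [|split].
  - simpl. auto.
  - destruct (Nat.leb_spec (k + l) k).
    + assert (l = 0) by lia. subst l. rewrite Nat.add_0_r, W1k, <- W2l. auto.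
    + rewrite <- W2l. f_equal. lia.
  - intros i Hi. destruct (Nat.leb_spec i k), (Nat.leb_spec (S i) k).
    + apply H1. lia.
    + replace i with k by lia. replace (S k - k) with 1 by lia.
      rewrite W1k, <- W20. apply H2. lia.
    + lia.
    + replace (S i - k) with (S (i - k)) by lia. apply H2. lia.
Qed.

Lemma path_rev_walk k x : is_path adj k x -> has_walk adj (x k) (x 0) k.
Proof.
  intros [Ha _]. exists (fun i => x (k - i)). split; [|split].
  - rewrite Nat.sub_0_r. auto.
  - rewrite Nat.sub_diag. auto.
  - intros i Hi. apply adj_sym. replace (k - i) with (S (k - S i)) by lia. apply Ha. lia.
Qed.

End StraightPaths.

Definition unroll {V : Type} (s : nat) (c : nat -> V) (i : nat) : V := c (i mod s).

Lemma unroll_congr {V : Type} (s : nat) (c : nat -> V) i j m :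
  i mod s = j mod s -> unroll s c (i + m) = unroll s c (j + m).
Proof.
  intros E. unfold unroll.
  rewrite <- (Nat.Div0.add_mod_idemp_l i), <- (Nat.Div0.add_mod_idemp_l j), E. auto.
Qed.

Lemma unroll_mod {V : Type} (s : nat) (c : nat -> V) i : unroll s c (i mod s) = unroll s c i.
Proof. unfold unroll. rewrite Nat.Div0.mod_mod. auto. Qed.

Lemma unroll_period {V : Type} (s : nat) (c : nat -> V) i : unroll s c (i + s) = unroll s c i.
Proof.
  unfold unroll. replace (i + s) with (i + 1 * s) by lia. rewrite Nat.Div0.mod_add. auto.
Qed.

Section Unrolling.
Context {V : Type} {adj : V -> V -> Prop} {s : nat} {c : nat -> V}.
Context (closed : closed_path adj s c).

Let s_pos : 0 < s.
Proof. destruct closed as [_ [H _]]. lia. Qed.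

Lemma mod_lt_s i : i mod s < s.
Proof. apply Nat.mod_upper_bound. lia. Qed.

Lemma unroll_small i : i <= s -> unroll s c i = c i.
Proof.
  intros Hi. unfold unroll. destruct (Nat.eq_dec i s) as [->|H].
  - rewrite Nat.Div0.mod_same. destruct closed as [_ [_ E]]. auto.
  - rewrite Nat.mod_small by lia. auto.
Qed.

Lemma unroll_succ i : unroll s c (S i) = c (S (i mod s)).
Proof.
  pose proof (mod_lt_s i). rewrite <- unroll_small by lia.
  replace (S i) with (i + 1) by lia. replace (S (i mod s)) with (i mod s + 1) by lia.
  apply (unroll_congr s c). rewrite Nat.Div0.mod_mod. auto.
Qed.

Lemma unroll_adj i : adj (unroll s c i) (unroll s c (S i)).
Proof.
  rewrite unroll_succ. destruct closed as [[Ha _] _]. apply Ha, mod_lt_s.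
Qed.

Lemma unroll_lies_in a k : lies_in s c k (fun j => unroll s c (a + j)).
Proof.
  split; intros j Hj; exists ((a + j) mod s); pose proof (mod_lt_s (a + j)); split;
    auto; try lia.
  left. split; auto. replace (a + S j) with (S (a + j)) by lia. apply unroll_succ.
Qed.

End Unrolling.

Section Circuits.
Context {V : Type} {adj : V -> V -> Prop} {opp : V -> V -> V -> Prop} {s : nat}.
Context (adj_sym : forall x y, adj x y -> adj y x).

Lemma lies_ext (c d : nat -> V) k y : (forall i, i <= s -> c i = d i) ->
  lies_in s c k y -> lies_in s d k y.
Proof.
  intros E [H1 H2]. split.
  - intros j Hj. destruct (H1 j Hj) as [i [Hi Ei]]. exists i. rewrite <- E by lia. auto.
  - intros j Hj. destruct (H2 j Hj) as [i [Hi Ei]]. exists i. rewrite <- !E by lia. auto.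
Qed.

Lemma lies_rev (c : nat -> V) k y : lies_in s c k y -> lies_in s (fun i => c (s - i)) k y.
Proof.
  intros [H1 H2]. split.
  - intros j Hj. destruct (H1 j Hj) as [i [Hi Ei]]. exists (s - i). split; [lia|].
    rewrite Ei. f_equal. lia.
  - intros j Hj. destruct (H2 j Hj) as [i [Hi Ei]]. exists (s - S i). split; [lia|].
    replace (s - (s - S i)) with (S i) by lia.
    replace (s - S (s - S i)) with i by lia. tauto.
Qed.

Lemma rev_closed (c : nat -> V) : closed_path adj s c -> closed_path adj s (fun i => c (s - i)).
Proof.
  intros [[Ha Hb] [H3 E]]. split; [split|split]; auto.
  - intros i Hi. apply adj_sym. replace (s - i) with (S (s - S i)) by lia. apply Ha. lia.
  - intros i Hi Ei. apply (Hb (s - (i + 2))); [lia|].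
    replace (s - (i + 2) + 2) with (s - i) by lia. auto.
  - cbv beta. rewrite Nat.sub_diag, Nat.sub_0_r. auto.
Qed.

Lemma rev_straight_circuit (c : nat -> V) : straight_circuit adj opp s c ->
  straight_circuit adj opp s (fun i => c (s - i)).
Proof.
  intros Hs k y [Hp Hl]. apply Hs. split; auto.
  apply lies_rev in Hl. eapply lies_ext; [|exact Hl].
  intros i Hi. cbv beta. f_equal. lia.
Qed.

Lemma circuit_window (c : nat -> V) a k : closed_path adj s c -> straight_circuit adj opp s c ->
  a + k <= s -> straight_path adj opp k (fun i => c (a + i)).
Proof.
  intros [[Ha Hb] _] Hs Hk.
  assert (Hp : is_path adj k (fun i => c (a + i))).
  { split; intros i Hi.
    - replace (a + S i) with (S (a + i)) by lia. apply Ha. lia.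
    - replace (a + (i + 2)) with (a + i + 2) by lia. apply Hb. lia. }
  split; auto. apply Hs. split; auto. split.
  - intros j Hj. exists (a + j). split; [lia|auto].
  - intros j Hj. exists (a + j). split; [lia|]. left. split; [auto|f_equal; lia].
Qed.

End Circuits.

Section Ngon.
Context {V : Type} {adj : V -> V -> Prop} {opp : V -> V -> V -> Prop} (n : nat).
Context (n_ge2 : 2 <= n).
Context (adj_sym : forall x y, adj x y -> adj y x).
Context (opp_loc : forall v, opposition_on (nbhd adj v) (opp v)).
Context (vp2 : VP2 adj opp n) (vp3 : VP3 adj opp n).

Lemma opp_sym v x y : opp v x y -> opp v y x.
Proof. apply (opp_loc v). Qed.

Lemma opp_irr v x : ~ opp v x x.
Proof. apply (opp_loc v). Qed.

Lemma opp_nbhd v x y : opp v x y -> adj v x /\ adj v y.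
Proof. apply (opp_loc v). Qed.

(* (VP2) forbids closed straight paths of length at most [n]. *)
Lemma straight_not_closed m x : 1 <= m <= n -> straight_path adj opp m x -> x 0 <> x m.
Proof.
  intros Hm Hx E. destruct (Nat.eq_dec m n) as [->|Hne].
  - (* [x 0, x (n-1)] is a second straight path between the ends of x|[0, n-1] *)
    set (y := fun i => if Nat.eqb i 0 then x 0 else x (n - 1)).
    assert (Hy : straight_path adj opp 1 y).
    { split; [split|]; intros i Hi; try lia.
      replace i with 0 by lia. unfold y; simpl. destruct Hx as [[Ha _] _].
      rewrite E. apply adj_sym. replace n with (S (n - 1)) at 2 by lia. apply Ha. lia. }
    destruct (vp2 (n - 1) ltac:(lia) x (straight_le n (n - 1) x ltac:(lia) Hx)
      1 y ltac:(lia) Hy eq_refl eq_refl) as [H1 _].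
    assert (n = 2) by lia. subst n. destruct Hx as [[_ Hb] _]. apply (Hb 0); auto.
  - (* the trivial 0-path would be a shorter straight path between the ends *)
    destruct (vp2 m ltac:(lia) x Hx 0 (fun _ => x 0) ltac:(lia)) as [H1 _]; try lia; auto.
    split; [split|]; intros i Hi; lia.
Qed.

Section Circuit.
Context (c : nat -> V) (c_closed : closed_path adj (2 * n) c)
  (c_straight : straight_circuit adj opp (2 * n) c).

Lemma circuit_no_backtrack_at_base : c 1 <> c (2 * n - 1).
Proof.
  intros E.
  pose proof (circuit_window c 1 (n - 1) c_closed c_straight ltac:(lia)) as Hx.
  pose proof (circuit_window _ 1 (n - 1) (rev_closed adj_sym c c_closed)
    (rev_straight_circuit c c_straight) ltac:(lia)) as Hy.
  destruct (vp2 (n - 1) ltac:(lia) _ Hx (n - 1) _ ltac:(lia) Hy) as [_ Heq].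
  - cbv beta. replace (2 * n - (1 + 0)) with (2 * n - 1) by lia. auto.
  - cbv beta. f_equal. lia.
  - specialize (Heq (n - 2) ltac:(lia)). cbv beta in Heq.
    destruct c_closed as [[_ Hb] _]. apply (Hb (n - 1)); [lia|].
    replace (n - 1 + 2) with (2 * n - (1 + (n - 2))) by lia. rewrite Heq. f_equal. lia.
Qed.

Lemma unroll_no_backtrack i : unroll (2 * n) c i <> unroll (2 * n) c (i + 2).
Proof.
  rewrite <- (unroll_mod (2 * n) c i).
  rewrite (unroll_congr (2 * n) c i (i mod (2 * n)) 2) by (rewrite Nat.Div0.mod_mod; auto).
  pose proof (mod_lt_s c_closed i). set (j := i mod (2 * n)) in *.
  destruct (Nat.eq_dec j (2 * n - 1)) as [E|E].
  - rewrite E. replace (2 * n - 1 + 2) with (1 + 2 * n) by lia.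
    rewrite (unroll_period (2 * n) c), !(unroll_small c_closed) by lia.
    intro F. apply circuit_no_backtrack_at_base. auto.
  - rewrite !(unroll_small c_closed) by lia. destruct c_closed as [[_ Hb] _]. apply Hb. lia.
Qed.

Lemma unroll_straight a k : straight_path adj opp k (fun j => unroll (2 * n) c (a + j)).
Proof.
  assert (Hp : is_path adj k (fun j => unroll (2 * n) c (a + j))).
  { split; intros i Hi.
    - replace (a + S i) with (S (a + i)) by lia. apply (unroll_adj c_closed).
    - replace (a + (i + 2)) with (a + i + 2) by lia. apply unroll_no_backtrack. }
  split; auto. apply c_straight. split; auto. apply (unroll_lies_in c_closed).
Qed.

Lemma unroll_injective i j :
  unroll (2 * n) c i = unroll (2 * n) c j -> i mod (2 * n) = j mod (2 * n).
Proof.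
  assert (G : forall a b, a < b < 2 * n -> unroll (2 * n) c a <> unroll (2 * n) c b).
  { intros a b Hab Eab. destruct (Nat.le_gt_cases (b - a) n) as [Hd|Hd].
    - apply (straight_not_closed (b - a) _ ltac:(lia) (unroll_straight a (b - a))).
      cbv beta. rewrite Nat.add_0_r, Eab. f_equal. lia.
    - apply (straight_not_closed (2 * n - (b - a)) _ ltac:(lia)
        (unroll_straight b (2 * n - (b - a)))).
      cbv beta. rewrite Nat.add_0_r. replace (b + (2 * n - (b - a))) with (a + 2 * n) by lia.
      rewrite (unroll_period (2 * n) c). auto. }
  intros E. rewrite <- (unroll_mod (2 * n) c i), <- (unroll_mod (2 * n) c j) in E.
  pose proof (mod_lt_s c_closed i). pose proof (mod_lt_s c_closed j).
  destruct (Nat.lt_total (i mod (2 * n)) (j mod (2 * n))) as [L|[L|L]]; auto;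
    exfalso; eapply G; eauto.
Qed.

(* A path lying in the circuit whose first edge is [c t0, c (t0+1)] runs along the
   circuit in that direction, since it cannot turn back. *)
Lemma path_follows_circuit (y : nat -> V) t0 : is_path adj (n + 1) y ->
  lies_in (2 * n) c (n + 1) y -> t0 < 2 * n -> y 0 = c t0 -> y 1 = c (S t0) ->
  forall j, j <= n + 1 -> y j = unroll (2 * n) c (t0 + j).
Proof.
  intros [_ Hb] [_ He] Ht E0 E1.
  assert (to_unroll : forall i, i <= 2 * n -> c i = unroll (2 * n) c i)
    by (intros; symmetry; apply (unroll_small c_closed); auto).
  assert (P : forall j, j + 1 <= n + 1 ->
    y j = unroll (2 * n) c (t0 + j) /\ y (S j) = unroll (2 * n) c (t0 + S j)).
  { induction j as [|j IH]; intros Hj.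
    - rewrite Nat.add_0_r, <- !to_unroll by lia. split; auto. rewrite E1. f_equal. lia.
    - destruct (IH ltac:(lia)) as [IH1 IH2]. split; auto.
      destruct (He (S j) ltac:(lia)) as [s [Hs [[F1 F2]|[F1 F2]]]];
        rewrite to_unroll, IH2 in F1 by lia; apply unroll_injective in F1.
      + rewrite F2, to_unroll by lia.
        replace (S s) with (s + 1) by lia. replace (t0 + S (S j)) with (t0 + S j + 1) by lia.
        apply (unroll_congr (2 * n) c). auto.
      + exfalso. apply (Hb j ltac:(lia)).
        replace (j + 2) with (S (S j)) by lia. rewrite F2, IH1, to_unroll by lia.
        pose proof (unroll_congr (2 * n) c _ _ (2 * n - 1) F1) as G.
        replace (t0 + S j + (2 * n - 1)) with (t0 + j + 2 * n) in G by lia.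
        replace (S s + (2 * n - 1)) with (s + 2 * n) in G by lia.
        rewrite !(unroll_period (2 * n) c) in G. auto. }
  intros j Hj. destruct j as [|j]; apply P; lia.
Qed.

End Circuit.

Lemma straight_completion (y : nat -> V) : straight_path adj opp (n + 1) y ->
  exists t, (forall j, j <= n + 1 -> t j = y j) /\ t (2 * n) = y 0 /\
    forall a k, straight_path adj opp k (fun i => t (a + i)).
Proof.
  intros Hy. destruct (vp3 y Hy) as [c [Hc [Hs Hl]]].
  assert (along : forall d t0, closed_path adj (2 * n) d -> straight_circuit adj opp (2 * n) d ->
    lies_in (2 * n) d (n + 1) y -> t0 < 2 * n -> y 0 = d t0 -> y 1 = d (S t0) ->
    exists t, (forall j, j <= n + 1 -> t j = y j) /\ t (2 * n) = y 0 /\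
      forall a k, straight_path adj opp k (fun i => t (a + i))).
  { intros d t0 Hd Hds Hdl Ht E0 E1.
    pose proof (path_follows_circuit d Hd Hds y t0 (proj1 Hy) Hdl Ht E0 E1) as T.
    exists (fun i => unroll (2 * n) d (t0 + i)). split; [|split].
    - intros j Hj. symmetry. auto.
    - cbv beta. rewrite (unroll_period (2 * n) d), (T 0) by lia. f_equal. lia.
    - intros a k. eapply straight_ext; [|apply (unroll_straight d Hd Hds (t0 + a) k)].
      intros i Hi. cbv beta. f_equal. lia. }
  destruct (proj2 Hl 0 ltac:(lia)) as [s [Hs2 [[F1 F2]|[F1 F2]]]].
  - (* the first edge of y is traversed in the direction of the circuit *)
    apply (along c s); auto.
  - (* ... or against it: reverse the circuit *)
    apply (along _ (2 * n - S s) (rev_closed adj_sym c Hc) (rev_straight_circuit c Hs)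
      (lies_rev c _ y Hl)); [lia| |]; cbv beta.
    + rewrite F1. f_equal. lia.
    + rewrite F2. f_equal. lia.
Qed.

Context (plump2 : forall v, plump 2 (nbhd adj v) (opp v)).

Lemma straight_extend v u : adj v u -> forall k, 1 <= k ->
  exists p, straight_path adj opp k p /\ p 0 = v /\ p 1 = u.
Proof.
  intros Hvu k Hk. induction k as [|k IH]; [lia|].
  destruct (Nat.eq_dec k 0) as [->|Hk0].
  - exists (fun i => if Nat.eqb i 0 then v else u).
    split; [split; [split|]|split]; auto; intros i Hi; try lia.
    replace i with 0 by lia. auto.
  - destruct (IH ltac:(lia)) as [p [Hp [P0 P1]]].
    assert (Hlast : adj (p k) (p (k - 1))).
    { destruct Hp as [[Ha _] _]. specialize (Ha (k - 1) ltac:(lia)).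
      replace (S (k - 1)) with k in Ha by lia. apply adj_sym, Ha. }
    destruct (plump2 (p k) [p (k - 1)]) as [z [_ Hz]];
      [intros x [<-|[]]; exact Hlast|simpl; lia|].
    exists (fun i => if Nat.eqb i (S k) then z else p i). split.
    + apply (straight_snoc opp_nbhd opp_irr); [lia|auto|].
      apply opp_sym, Hz. simpl. auto.
    + simpl. rewrite P0, P1. destruct k; [lia|auto].
Qed.

Definition straight_via (v w a : V) : Prop :=
  exists r, straight_path adj opp n r /\ r 0 = v /\ r n = w /\ r (n - 1) = a.

(* Going around the other half of the circuit through [q] and [c] shows that the
   penultimate vertex of a straight n-path may be replaced by any vertex opposite to it. *)
Lemma straight_via_switch v w q c : straight_path adj opp n q -> q 0 = v -> q n = w ->
  opp w (q (n - 1)) c -> straight_via v w c.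
Proof.
  intros Hq Q0 Qn Hc. rewrite <- Qn in Hc.
  pose proof (straight_snoc opp_nbhd opp_irr n q c ltac:(lia) Hq Hc) as Hy.
  set (y := fun i => if Nat.eqb i (S n) then c else q i) in Hy.
  assert (y_old : forall i, i <= n -> y i = q i).
  { intros i Hi. unfold y. destruct (Nat.eqb_spec i (S n)); [lia|auto]. }
  assert (y_new : y (S n) = c) by (unfold y; rewrite Nat.eqb_refl; auto).
  replace (S n) with (n + 1) in Hy, y_new by lia.
  destruct (straight_completion y Hy) as [t [T1 [T2 T3]]].
  exists (fun i => t (n + (n - i))). split; [|split; [|split]]; cbv beta.
  - exact (straight_rev adj_sym opp_sym n _ (T3 n n)).
  - rewrite Nat.sub_0_r. replace (n + n) with (2 * n) by lia. rewrite T2, y_old by lia. auto.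
  - rewrite Nat.sub_diag, Nat.add_0_r, T1, y_old by lia. auto.
  - replace (n + (n - (n - 1))) with (n + 1) by lia. rewrite T1 by lia. auto.
Qed.

(* Two straight n-paths from [v] to [w] which agree at their second vertex agree
   at their penultimate vertex, by uniqueness (VP2) of straight (n-1)-paths. *)
Lemma straight_via_second v w a b r s :
  straight_path adj opp n r -> r 0 = v -> r n = w -> r (n - 1) = a ->
  straight_path adj opp n s -> s 0 = v -> s n = w -> s (n - 1) = b ->
  r 1 = s 1 -> a = b.
Proof.
  intros Hr R0 Rn Ra Hs S0 Sn Sb E.
  destruct (vp2 (n - 1) ltac:(lia) _ (straight_shift n 1 r ltac:(lia) Hr) (n - 1) _ ltac:(lia)
    (straight_shift n 1 s ltac:(lia) Hs)) as [_ Heq]; cbv beta.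
  - rewrite !Nat.add_0_r. auto.
  - replace (1 + (n - 1)) with n by lia. congruence.
  - specialize (Heq (n - 2) ltac:(lia)). cbv beta in Heq.
    replace (1 + (n - 2)) with (n - 1) in Heq by lia. congruence.
Qed.

(* If [v] has trivial opposition, then at the far end [w] of straight n-paths from [v]
   any two distinct penultimate vertices are opposite: glue the two paths at [v]
   into a straight (n+1)-path, complete it to a straight circuit, and read off the
   opposition at [w]. *)
Lemma straight_via_opposite v w a b : trivial_opp (nbhd adj v) (opp v) ->
  straight_via v w a -> straight_via v w b -> a <> b -> opp w a b.
Proof.
  intros Htv [r [Hr [R0 [Rn Ra]]]] [s [Hs [S0 [Sn Sb]]]] Hab.
  assert (second : adj v (r 1) /\ adj v (s 1)).
  { destruct Hr as [[Ha _] _], Hs as [[Sa _] _].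
    rewrite <- R0 at 1. rewrite <- S0. split; [apply Ha|apply Sa]; lia. }
  assert (Hy : straight_path adj opp (n + 1) (fun i => match i with 0 => s 1 | S j => r j end)).
  { replace (n + 1) with (S n) by lia.
    apply (straight_cons adj_sym opp_nbhd opp_irr); [auto|].
    rewrite R0. apply Htv; try apply second.
    intro E. apply Hab. apply (straight_via_second v w a b r s); auto. }
  destruct (straight_completion _ Hy) as [t [T1 [T2 T3]]]. cbv beta in T1, T2.
  (* the far half of the circuit, from [w] back to [s 1], is [s] reversed *)
  destruct (vp2 (n - 1) ltac:(lia) _
    (straight_rev adj_sym opp_sym (n - 1) _ (straight_shift n 1 s ltac:(lia) Hs))
    (n - 1) _ ltac:(lia) (T3 (n + 1) (n - 1))) as [_ Heq]; cbv beta.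
  - rewrite Nat.add_0_r, T1 by lia. replace (n + 1) with (S n) by lia.
    replace (1 + (n - 1 - 0)) with n by lia. congruence.
  - replace (n + 1 + (n - 1)) with (2 * n) by lia. rewrite T2. f_equal. lia.
  - specialize (Heq 1 ltac:(lia)). cbv beta in Heq.
    replace (1 + (n - 1 - 1)) with (n - 1) in Heq by lia.
    destruct (T3 n 2) as [_ Hst]. specialize (Hst 0 ltac:(lia)). cbv beta in Hst.
    replace (n + (0 + 2)) with (n + 1 + 1) in Hst by lia.
    rewrite Heq, Nat.add_0_r, !T1 in Hst by lia.
    replace (n + 1) with (S n) in Hst by lia. replace n with (S (n - 1)) in Hst at 2 by lia.
    cbn in Hst. replace (S (n - 1)) with n in Hst by lia. congruence.
Qed.

(* Triviality of the opposition relation propagates along straight n-paths: every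
   neighbour [a] of [w] is a penultimate vertex of a straight n-path from [v] (switch
   twice, through a vertex opposite both [a] and the given penultimate vertex). *)
Lemma trivial_transfer v w p : trivial_opp (nbhd adj v) (opp v) ->
  straight_path adj opp n p -> p 0 = v -> p n = w -> trivial_opp (nbhd adj w) (opp w).
Proof.
  intros Htv Hp P0 Pn.
  assert (Hpen : adj w (p (n - 1))).
  { destruct Hp as [[Ha _] _]. specialize (Ha (n - 1) ltac:(lia)).
    replace (S (n - 1)) with n in Ha by lia. rewrite <- Pn. apply adj_sym, Ha. }
  assert (every_via : forall a, adj w a -> straight_via v w a).
  { intros a Ha. destruct (plump2 w [a; p (n - 1)]) as [c [_ Hc]];
      [intros x [<-|[<-|[]]]; auto|simpl; lia|].
    destruct (straight_via_switch v w p c Hp P0 Pn) as [r [Hr [R0 [Rn Rc]]]].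
    - apply opp_sym, Hc. simpl. auto.
    - apply (straight_via_switch v w r a Hr R0 Rn). rewrite Rc. apply Hc. simpl. auto. }
  intros a b Ha Hb Hab. apply (straight_via_opposite v); auto.
Qed.

(* Triviality of the opposition relation propagates to vertices at distance 2:
   [v] and [w] are the far ends of two straight n-paths sharing their last n-1 edges. *)
Lemma trivial_two_steps v u w : trivial_opp (nbhd adj v) (opp v) -> adj v u -> adj u w ->
  trivial_opp (nbhd adj w) (opp w).
Proof.
  intros Htv Hvu Huw.
  destruct (plump2 u [v; w]) as [x [Hux Hx]];
    [intros y [<-|[<-|[]]]; unfold nbhd; auto|simpl; lia|].
  destruct (straight_extend u x Hux (n - 1) ltac:(lia)) as [p [Hp [P0 P1]]].
  assert (via : forall z, opp u x z ->
    straight_path adj opp n (fun i => match i with 0 => z | S j => p j end)).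
  { intros z Hz. replace n with (S (n - 1)) at 1 by lia.
    apply (straight_cons adj_sym opp_nbhd opp_irr); [auto|].
    rewrite P0, P1. apply opp_sym, Hz. }
  pose proof (via v (Hx v ltac:(simpl; auto))) as Pv.
  pose proof (via w (Hx w ltac:(simpl; auto))) as Pw.
  (* the common far end [z = p (n-1)] inherits triviality from [v], and passes it to [w] *)
  assert (Hz : trivial_opp (nbhd adj (p (n - 1))) (opp (p (n - 1)))).
  { apply (trivial_transfer v _ _ Htv Pv); auto. cbv beta.
    replace n with (S (n - 1)) at 1 by lia. auto. }
  apply (trivial_transfer _ w _ Hz (straight_rev adj_sym opp_sym n _ Pw)); cbv beta.
  - rewrite Nat.sub_0_r. replace n with (S (n - 1)) at 1 by lia. auto.
  - rewrite Nat.sub_diag. auto.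
Qed.

Lemma trivial_even_walk v w k : trivial_opp (nbhd adj v) (opp v) ->
  has_walk adj v w k -> Nat.Even k -> trivial_opp (nbhd adj w) (opp w).
Proof.
  intros Htv [x [X0 [Xk Hx]]] [m ->]. subst v w. induction m as [|m IH]; auto.
  apply (trivial_two_steps (x (2 * m)) (x (S (2 * m)))).
  - apply IH. intros i Hi. apply Hx. lia.
  - apply Hx. lia.
  - replace (2 * S m) with (S (S (2 * m))) by lia. apply Hx. lia.
Qed.

(* A vertex with trivial opposition is joined by a walk of length n to another
   such vertex, namely the far end of any straight n-path starting at it. *)
Lemma trivial_partner v : trivial_opp (nbhd adj v) (opp v) ->
  exists z, trivial_opp (nbhd adj z) (opp z) /\ has_walk adj z v n.
Proof.
  intros Htv. destruct (plump2 v []) as [u [Hu _]]; [intros x []|simpl; lia|].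
  destruct (straight_extend v u Hu n ltac:(lia)) as [p [Hp [P0 _]]].
  exists (p n). split.
  - apply (trivial_transfer v _ p Htv Hp P0 eq_refl).
  - rewrite <- P0. apply (path_rev_walk adj_sym), Hp.
Qed.

End Ngon.

Theorem proposition2p17 (V : Type) (adj : V -> V -> Prop)
  (opp : V -> V -> V -> Prop) (n : nat) :
  2 <= n -> veldkamp_ngon adj opp n ->
  forall v : V, trivial_opp (nbhd adj v) (opp v) ->
  (forall w d, is_dist adj v w d -> Nat.Even d -> trivial_opp (nbhd adj w) (opp w)) /\
  (Nat.Odd n -> forall w, trivial_opp (nbhd adj w) (opp w)).
Proof.
  intros Hn [_ [[[Hsym _] Hloc] [[Hcon _] [Hvp2 Hvp3]]]] v Htv.
  assert (Hopp : forall x, opposition_on (nbhd adj x) (opp x)) by apply Hloc.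
  assert (Hpl : forall x, plump 2 (nbhd adj x) (opp x)) by apply Hloc.
  pose proof (trivial_even_walk n Hn Hsym Hopp Hvp2 Hvp3 Hpl) as even_walk.
  split.
  -
    intros w d [Hwalk _]. apply (even_walk v w d Htv Hwalk).
  - (* walk to [w] directly, or via a trivial vertex at distance n if the walk is odd *)
    intros Hodd w. destruct (Hcon v w) as [k Hk].
    destruct (Nat.Even_or_Odd k) as [Ek|Ok].
    + apply (even_walk v w k Htv Hk Ek).
    + destruct (trivial_partner n Hn Hsym Hopp Hvp2 Hvp3 Hpl v Htv) as [z [Hz Hzv]].
      apply (even_walk z w (n + k) Hz (walk_concat z v w n k Hzv Hk)).
      apply Nat.Odd_Odd_add; auto.
Qed.
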